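(* Let $n\ge 13$ and let $CT_n$ be the set of chemical trees on $n$ vertices. For a tree $T$ write $\mathbf m(T)=(m_{3,3}(T),m_{2,3}(T),m_{1,2}(T),m_{1,3}(T),m_{2,2}(T))$. For $1\le i\le 13$ let $A_i$ be the set of trees $T\in CT_n$ with $\Delta(T)\le 3$, $n_3(T)\le 2$ and $\mathbf m(T)$ equal to the following vector: $A_1:(0,0,2,0,n-3)$; $A_2:(0,1,1,2,n-5)$; $A_3:(0,2,2,1,n-6)$; $A_4:(0,3,3,0,n-7)$; $A_5:(0,2,0,4,n-7)$; $A_6:(0,3,1,3,n-8)$; $A_7:(0,4,2,2,n-9)$; $A_8:(1,1,1,3,n-7)$; $A_9:(0,5,3,1,n-10)$; $A_{10}:(1,2,2,2,n-8)$; $A_{11}:(0,6,4,0,n-11)$; $A_{12}:(1,3,3,1,n-9)$; $A_{13}:(1,4,4,0,n-10)$. Let $\Omega(n)$ be the set of trees $T\in CT_n$ having $3$ vertices of degree $3$, $n-8$ vertices of degree $2$ and $5$ vertices of degree $1$, with $m_{1,2}(T)=m_{2,3}(T)=5$, $m_{1,3}(T)=0$, $m_{3,3}(T)=2$, $m_{2,2}(T)=n-13$. Let $T_1\in A_1$, $T_2\in A_4$, $T_3\in A_3$, $T_4\in A_2$, $T_5\in A_{13}$, $T_6\in A_{12}$, $T_7\in A_{11}$, $T_8\in A_{10}$, $T_9\in A_9$, $T_{10}\in A_8$, $T_{11}\in A_7$, $T_{12}\in A_6$, $T_{13}\in A_5$, $T_{14}\in\Omega(n)$, and let $T\in CT_n$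 not belong to $A_1\cup\cdots\cup A_{13}\cup\Omega(n)$. Then $SO_{red}(T_1)<SO_{red}(T_2)<\cdots<SO_{red}(T_{13})<SO_{red}(T_{14})<SO_{red}(T)$.
   Context: All graphs are simple and connected. A chemical graph is a graph with maximum degree at most $4$; a chemical tree is a chemical graph that is a tree. $d_G(u)$ is the degree of $u$, $\Delta(G)$ the maximum degree, $n_i(G)$ the number of vertices of degree $i$, and $m_{i,j}(G)$ the number of edges joining a vertex of degree $i$ to a vertex of degree $j$. The reduced Sombor index is $SO_{red}(G)=\sum_{uv\in E(G)}\sqrt{(d_G(u)-1)^2+(d_G(v)-1)^2}$. *)

From HB Require Import structures.
From mathcomp Require Import all_boot all_order all_algebra.
From mathcomp Require Import Rstruct.
From Stdlib Require Import Reals.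
Set Implicit Arguments. Unset Strict Implicit. Unset Printing Implicit Defensive.
Import Order.TTheory GRing.Theory Num.Theory.

Definition simple_graph (n : nat) (e : rel 'I_n) : Prop :=
  symmetric e /\ irreflexive e.

(* edge set: unordered pairs {u,v} represented as (u,v) with u < v *)
Definition edges (n : nat) (e : rel 'I_n) : {set 'I_n * 'I_n} :=
  [set p : 'I_n * 'I_n | (p.1 < p.2)%N && e p.1 p.2].

Definition deg (n : nat) (e : rel 'I_n) (v : 'I_n) : nat := #|[set w | e v w]|.

Definition connected_graph (n : nat) (e : rel 'I_n) : Prop :=
  forall x y : 'I_n, connect e x y.

Definition is_tree (n : nat) (e : rel 'I_n) : Prop :=
  simple_graph e /\ connected_graph e /\ #|edges e| = n.-1.

Definition chemical (n : nat) (e : rel 'I_n) : Prop := forall v, (deg e v <= 4)%N.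

Definition chemical_tree (n : nat) (e : rel 'I_n) : Prop := is_tree e /\ chemical e.

Definition ndeg (n : nat) (e : rel 'I_n) (i : nat) : nat :=
  #|[set v | deg e v == i]|.

Definition medge (n : nat) (e : rel 'I_n) (i j : nat) : nat :=
  #|[set p in edges e | ((deg e p.1 == i) && (deg e p.2 == j))
                        || ((deg e p.1 == j) && (deg e p.2 == i))]|.

Definition maxdeg_le (n : nat) (e : rel 'I_n) (k : nat) : Prop :=
  forall v, (deg e v <= k)%N.

Local Open Scope ring_scope.
Definition SO_red (n : nat) (e : rel 'I_n) : R :=
  \sum_(p in edges e)
     sqrt (((deg e p.1)%:R - 1) ^+ 2 + ((deg e p.2)%:R - 1) ^+ 2).

Local Close Scope ring_scope.

Definition mvec (n : nat) (e : rel 'I_n) : nat * nat * nat * nat * nat :=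
  (medge e 3 3, medge e 2 3, medge e 1 2, medge e 1 3, medge e 2 2).

Definition Avec (n i : nat) : nat * nat * nat * nat * nat :=
  match i with
  | 1 => (0, 0, 2, 0, n - 3)
  | 2 => (0, 1, 1, 2, n - 5)
  | 3 => (0, 2, 2, 1, n - 6)
  | 4 => (0, 3, 3, 0, n - 7)
  | 5 => (0, 2, 0, 4, n - 7)
  | 6 => (0, 3, 1, 3, n - 8)
  | 7 => (0, 4, 2, 2, n - 9)
  | 8 => (1, 1, 1, 3, n - 7)
  | 9 => (0, 5, 3, 1, n - 10)
  | 10 => (1, 2, 2, 2, n - 8)
  | 11 => (0, 6, 4, 0, n - 11)
  | 12 => (1, 3, 3, 1, n - 9)
  | 13 => (1, 4, 4, 0, n - 10)
  | _ => (0, 0, 0, 0, 0)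
  end.

Definition inA (n : nat) (i : nat) (e : rel 'I_n) : Prop :=
  chemical_tree e /\ maxdeg_le e 3 /\ (ndeg e 3 <= 2)%N /\ mvec e = Avec n i.

Definition inOmega (n : nat) (e : rel 'I_n) : Prop :=
  chemical_tree e /\ ndeg e 3 = 3 /\ ndeg e 2 = n - 8 /\ ndeg e 1 = 5 /\
  medge e 1 2 = 5 /\ medge e 2 3 = 5 /\ medge e 1 3 = 0 /\
  medge e 3 3 = 2 /\ medge e 2 2 = n - 13.

Definition classT (n k : nat) (e : rel 'I_n) : Prop :=
  match k with
  | 1 => inA 1 e
  | 2 => inA 4 e
  | 3 => inA 3 e
  | 4 => inA 2 e
  | 14 => inOmega e
  | _ => inA (18 - k) e
  end.

From mathcomp Require Import all_boot all_order all_algebra.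
From mathcomp Require Import Rstruct.
From mathcomp Require Import ring lra zify.
Set Implicit Arguments. Unset Strict Implicit. Unset Printing Implicit Defensive.
Import Order.TTheory GRing.Theory Num.Theory.

(* Everything is governed by the numbers n_i of vertices and m_{i,j} of edges of each
   degree type: SO_red = sum m_{i,j} sqrt((i-1)^2 + (j-1)^2), and double counting gives
   sum_j (1 + [i = j]) m_{i,j} = i n_i, sum n_i = n and sum i n_i = 2(n-1).  On the
   classes A_i and Omega(n) the edge vector is prescribed, so the chain T_1 < ... < T_14
   compares explicit numbers a + b sqrt 2 + c sqrt 5 in which n cancels.  Any other tree
   has SO_red >= (n-1) sqrt 2 + 2(1 - sqrt 2) + (1 + sqrt 2/2) n_3 + 2(1 + sqrt 2) n_4,
   which exceeds SO_red(T_14) unless n_3 <= 3 and n_4 = 0, or n_3 = 0 and n_4 = 1.  Those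
   remaining trees are pinned down by the identities: with n_4 = 0 and n_3 <= 2 they lie
   in some A_i; with n_3 = 3 the three branching vertices cannot form a triangle, so
   m_{3,3} <= 2, and m_{3,3} = 2, m_{1,3} = 0 is exactly Omega(n). *)

(** * Connectivity and trees *)

Section Connectivity.
Variable n : nat.
Implicit Types (e : rel 'I_n) (S : {set 'I_n}).

Definition eset (p : 'I_n * 'I_n) : {set 'I_n} := [set p.1; p.2].

Definition epair (u v : 'I_n) : 'I_n * 'I_n := if u < v then (u, v) else (v, u).

Lemma eset_epair u v : eset (epair u v) = [set u; v].
Proof. by rewrite /eset /epair; case: ifP => _ //=; rewrite setUC. Qed.

Lemma epair_edges e u v : symmetric e -> irreflexive e -> e u v -> epair u v \in edges e.
Proof.
move=> sym irr euv; have uv : u != v by apply: contraTneq euv => ->; rewrite irr.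
rewrite /epair inE; case: (ltngtP u v) => [lt_uv | lt_vu | /val_inj eq_uv] /=.
- by rewrite lt_uv.
- by rewrite lt_vu -sym.
- by rewrite eq_uv eqxx in uv.
Qed.

Lemma eset_inj e : {in edges e &, injective eset}.
Proof.
move=> [a b] [c d]; rewrite !inE /eset /= => /andP [ab _] /andP [cd _] eq_set.
have /set2P a_cd : a \in [set c; d] by rewrite -eq_set set21.
have /set2P b_cd : b \in [set c; d] by rewrite -eq_set set22.
by move: ab cd; case: a_cd => ->; case: b_cd => -> //; lia.
Qed.

Lemma eset_edge e p x y : symmetric e -> p \in edges e -> eset p = [set x; y] -> x != y ->
  e x y.
Proof.
case: p => a b sym; rewrite inE /eset /= => /andP [_ eab] eq_set xy.
have /set2P x_ab : x \in [set a; b] by rewrite eq_set set21.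
have /set2P y_ab : y \in [set a; b] by rewrite eq_set set22.
by move: xy; case: x_ab => ->; case: y_ab => ->; rewrite ?eqxx // sym.
Qed.

Lemma exists_notin S : #|S| < n -> exists y, y \notin S.
Proof.
move=> ltSn; apply/existsP; apply: contraTT ltSn; rewrite negb_exists => /forallP inS.
rewrite -leqNgt -{1}(card_ord n) subset_leq_card //.
by apply/subsetP => y _; apply: negbNE (inS y).
Qed.

Lemma connected_edge_out e S x y : connected_graph e -> x \in S -> y \notin S ->
  exists u v, [/\ u \in S, v \notin S & e u v].
Proof.
move=> conn; have /connectP [p pxp ->] := conn x y.
elim: p x pxp => [|z p IH] x /=; first by move=> _ ->.
move=> /andP [exz pz] xS yS; have [zS | zS] := boolP (z \in S).
  exact: IH pz zS yS.
by exists x, z.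
Qed.

Lemma adj_deg_gt0 e u v : e u v -> 0 < deg e u.
Proof. by move=> euv; apply/card_gt0P; exists v; rewrite inE. Qed.

Lemma deg_gt0 e v : connected_graph e -> 1 < n -> 0 < deg e v.
Proof.
move=> conn n_gt1; have [y yv] : exists y, y \notin [set v].
  by apply: exists_notin; rewrite cards1.
have [u [w [/set1P -> _ evw]]] := connected_edge_out conn (set11 v) yv.
exact: adj_deg_gt0 evw.
Qed.

Lemma deg1_neighbour e x w w' : deg e x = 1 -> e x w -> e x w' -> w' = w.
Proof.
move=> /eqP/cards1P [z Nx] exw exw'.
have : w \in [set y | e x y] by rewrite inE.
have : w' \in [set y | e x y] by rewrite inE.
by rewrite Nx => /set1P -> /set1P ->.
Qed.

Lemma leaves_nonadjacent e u v : symmetric e -> connected_graph e -> 2 < n ->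
  e u v -> deg e u = 1 -> deg e v = 1 -> False.
Proof.
move=> sym conn n_gt2 euv du dv; have [y yuv] : exists y, y \notin [set u; v].
  by apply: exists_notin; rewrite cards2; case: (_ != _); lia.
have [a [b [/set2P auv buv eab]]] := connected_edge_out conn (set21 u v) yuv.
case: auv => ? in eab; subst a.
  by rewrite (deg1_neighbour du euv eab) set22 in buv.
by rewrite sym in euv; rewrite (deg1_neighbour dv euv eab) set21 in buv.
Qed.

(* Grow a vertex set one neighbour at a time: every step adds an edge inside the set. *)
Lemma connected_edges_ge e : symmetric e -> irreflexive e -> connected_graph e ->
  n.-1 <= #|edges e|.
Proof.
move=> sym irr conn; pose inside S := [set p in edges e | eset p \subset S].
suff grow k : k < n -> exists S, #|S| = k.+1 /\ k <= #|inside S|.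
  have [n0 | n_gt0] := posnP n; first by rewrite [in X in X <= _]n0.
  have [|S [_ hS]] := grow n.-1; first by lia.
  by apply: leq_trans hS (subset_leq_card _); apply/subsetP => p; rewrite inE => /andP [].
elim: k => [|k IH] lt_kn; first by exists [set Ordinal lt_kn]; rewrite cards1.
have [S [cardS insideS]] := IH (ltnW lt_kn).
have [x xS] : exists x, x \in S by apply/card_gt0P; rewrite cardS.
have [y yS] : exists y, y \notin S by apply: exists_notin; rewrite cardS.
have [u [v [uS vS euv]]] := connected_edge_out conn xS yS.
exists (v |: S); split; first by rewrite cardsU1 vS cardS.
suff : inside S \proper inside (v |: S) by move/proper_card; lia.
apply/properP; split.
  apply/subsetP => p; rewrite !inE => /andP [-> pS].
  exact: subset_trans pS (subsetU1 v S).
exists (epair u v); rewrite inE epair_edges //= eset_epair subUset !sub1set.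
  by rewrite setU11 setU1r.
by rewrite (negbTE vS) andbF.
Qed.

(* Deleting the edge ab keeps the tree connected (through c) but leaves n - 2 edges. *)
Lemma tree_no_triangle e a b c : is_tree e -> e a b -> e b c -> e a c -> False.
Proof.
move=> [[sym irr] [conn card_edges]] eab ebc eac.
pose e' x y := e x y && ([set x; y] != [set a; b]).
have sym' : symmetric e' by move=> x y; rewrite /e' sym setUC.
have irr' : irreflexive e' by move=> x; rewrite /e' irr.
have c_ab : c \notin [set a; b].
  by rewrite !inE negb_or; apply/andP; split; apply: contraTneq isT => c_eq;
     [move: eac | move: ebc]; rewrite c_eq irr.
have via_c z : z \in [set a; b] -> e' z c && e' c z.
  move=> z_ab; have zc_ab : [set z; c] != [set a; b].
    by apply: contraNneq c_ab => <-; rewrite set22.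
  rewrite /e' (sym c) [[set c; _]]setUC zc_ab !andbT.
  by case/set2P: z_ab => ->; rewrite andbb.
have conn' : connected_graph e'.
  move=> x y; apply: connect_sub (conn x y) => {}x {}y exy.
  have [xy_ab | xy_ab] := eqVneq [set x; y] [set a; b]; last first.
    by apply: connect1; rewrite /e' exy.
  have /via_c/andP [xc _] : x \in [set a; b] by rewrite -xy_ab set21.
  have /via_c/andP [_ cy] : y \in [set a; b] by rewrite -xy_ab set22.
  exact: connect_trans (connect1 xc) (connect1 cy).
have : edges e' \proper edges e.
  apply/properP; split; first by apply/subsetP => p; rewrite !inE => /and3P [-> -> _].
  exists (epair a b); first exact: epair_edges.
  by rewrite !inE /e' -/(eset _) eset_epair eqxx !andbF.
move/proper_card; have := connected_edges_ge sym' irr' conn'; lia.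
Qed.

End Connectivity.

Arguments eset {n} p.

(** * Counting edges by the degrees of their ends *)

Lemma partition_sum_ord (T : finType) (V : nmodType) (m : nat) (P : pred T)
    (f : T -> nat) (G : T -> V) :
  (forall x, P x -> f x < m) ->
  (\sum_(x | P x) G x = \sum_(k < m) \sum_(x | P x && (f x == k)) G x)%R.
Proof.
case: m => [|m] f_lt; last first.
  rewrite (partition_big (fun x => inord (f x) : 'I_m.+1) xpredT) //.
  apply: eq_bigr => k _; apply: eq_bigl => x.
  by case Px: (P x) => //=; rewrite -val_eqE /= inordK ?f_lt.
by rewrite big_ord0 big_pred0 // => x; apply/negP => /f_lt.
Qed.

Section DegreeCounting.
Variables (n : nat) (e : rel 'I_n).
Hypotheses (sym : symmetric e) (irr : irreflexive e) (chem : chemical e).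

Definition arcs (i j : nat) : nat :=
  #|[set x : 'I_n * 'I_n | e x.1 x.2 && (deg e x.1 == i) && (deg e x.2 == j)]|.

Lemma arcsE i j :
  arcs i j = \sum_(x | e x.1 x.2) ((deg e x.1 == i) && (deg e x.2 == j) : nat).
Proof.
rewrite /arcs -sum1dep_card (eq_bigl _ _ (fun x => esym (andbA _ _ _))) big_mkcondr.
by apply: eq_bigr => x _; case: (_ && _).
Qed.

Lemma arcsC i j : arcs i j = arcs j i.
Proof.
pose swap (x : 'I_n * 'I_n) := (x.2, x.1).
have swapK : involutive swap by case.
rewrite /arcs -(card_imset _ (inv_inj swapK)) (can2_imset_pre _ swapK swapK).
by apply: eq_card => -[u v]; rewrite !inE /= sym andbAC.
Qed.

Lemma arcs0 i : arcs i 0 = 0.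
Proof.
apply/eqP; rewrite cards_eq0; apply/eqP/setP => -[u v]; rewrite !inE /=.
apply/negbTE/andP => -[/andP [euv _] /eqP dv0].
by rewrite sym in euv; move: (adj_deg_gt0 euv); rewrite dv0.
Qed.

Lemma sum_arcs_edges (V : nmodType) (F : 'I_n * 'I_n -> V) :
  (forall x, F (x.2, x.1) = F x) ->
  (\sum_(x | e x.1 x.2) F x = (\sum_(p in edges e) F p) *+ 2)%R.
Proof.
move=> FC; rewrite (bigID (fun x : 'I_n * 'I_n => x.1 < x.2)) /= mulr2n.
congr (_ + _)%R; first by apply: eq_bigl => x; rewrite inE andbC.
rewrite (reindex_inj (h := fun x => (x.2, x.1))) /=; last by move=> [? ?] [? ?] [-> ->].
apply: eq_big => [[u v] | x _] /=; last exact: FC.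
rewrite inE sym /=; have [euv | _] := boolP (e u v); last by rewrite !andbF.
have uv : u != v by apply: contraTneq euv => ->; rewrite irr.
by rewrite !andbT; case: (ltngtP u v) => // /val_inj eq_uv; rewrite eq_uv eqxx in uv.
Qed.

Lemma sum_arcs_deg (V : nmodType) (F : nat -> nat -> V) :
  (\sum_(x | e x.1 x.2) F (deg e x.1) (deg e x.2) =
   \sum_(i < 5) \sum_(j < 5) F i j *+ arcs i j)%R.
Proof.
have deg_lt5 v : deg e v < 5 by rewrite ltnS chem.
rewrite (partition_sum_ord (m := 5) (f := fun x => deg e x.1)) //; apply: eq_bigr => i _.
rewrite (partition_sum_ord (m := 5) (f := fun x => deg e x.2)) //; apply: eq_bigr => j _.
rewrite -sumr_const; apply: eq_big => [x | x /andP [/andP [_ /eqP ->] /eqP ->] //].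
by rewrite inE.
Qed.

Lemma medgeC i j : medge e i j = medge e j i.
Proof. by apply: eq_card => p; rewrite !inE orbC. Qed.

Lemma arcs_medge i j : arcs i j = medge e (minn i j) (maxn i j) * (i == j).+1.
Proof.
have -> : medge e (minn i j) (maxn i j) = medge e i j.
  by rewrite /minn /maxn; case: ltnP; rewrite // medgeC.
pose Q x := ((deg e x.1 == i) && (deg e x.2 == j)) || ((deg e x.1 == j) && (deg e x.2 == i)).
have medge2 : medge e i j * 2 = \sum_(x | e x.1 x.2) (Q x : nat).
  rewrite (sum_arcs_edges (F := fun x => (Q x : nat))) => [|x]; last first.
    by rewrite /Q orbC andbC [(_ == j) && _]andbC.
  by rewrite -mulr_natr natn /medge -sum1dep_card big_mkcondr; congr (_ * 2).
have [ij | ij] := eqVneq i j.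
  by subst j; rewrite /= medge2 arcsE; apply: eq_bigr => x _; rewrite /Q orbb.
suff : medge e i j * 2 = arcs i j + arcs j i by rewrite -arcsC /=; lia.
rewrite medge2 !arcsE -big_split /=; apply: eq_bigr => x _; rewrite /Q.
move: (deg e x.1) (deg e x.2) => a b.
by case: (eqVneq a i) => [-> | _]; rewrite ?(negbTE ij) /= ?orbF ?addn0.
Qed.

Lemma sum_arcs_from k : \sum_(x | e x.1 x.2 && (deg e x.1 == k)) 1 = k * ndeg e k.
Proof.
rewrite (eq_bigl (fun x => (deg e x.1 == k) && e x.1 x.2)) => [|x]; last exact: andbC.
rewrite -(pair_big_dep (fun v => deg e v == k) (fun v w => e v w) (fun _ _ => 1)) /=.
rewrite (eq_bigr (fun _ => k)) => [|v /eqP <-]; last by rewrite sum1dep_card.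
by rewrite sum_nat_cond_const mulnC.
Qed.

Lemma sum_arcs_row k : \sum_(j < 5) arcs k j = k * ndeg e k.
Proof.
rewrite -sum_arcs_from (partition_sum_ord (m := 5) (f := fun x => deg e x.2)).
  by apply: eq_bigr => j _; rewrite sum1dep_card.
by move=> x _; rewrite ltnS chem.
Qed.

Lemma sum_ndeg : \sum_(k < 5) ndeg e k = n.
Proof.
rewrite -[RHS]card_ord -sum1_card (partition_sum_ord (m := 5) (f := deg e)).
  by apply: eq_bigr => k _; rewrite sum1dep_card.
by move=> v _; rewrite ltnS chem.
Qed.

Lemma handshake : \sum_(k < 5) k * ndeg e k = #|edges e| * 2.
Proof.
transitivity (\sum_(x | e x.1 x.2) 1).
  rewrite (partition_sum_ord (m := 5) (f := fun x => deg e x.1)).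
    by apply: eq_bigr => k _; rewrite sum_arcs_from.
  by move=> x _; rewrite ltnS chem.
by rewrite sum_arcs_edges // -mulr_natr natn sum1_card.
Qed.

Lemma arcs_boundary k : connected_graph e -> 0 < ndeg e k < n ->
  exists2 j, j != k & 0 < arcs k j.
Proof.
move=> conn /andP [/card_gt0P [u uD] ltDn].
have [w wD] := exists_notin ltDn.
have [x [y [xD yD exy]]] := connected_edge_out conn uD wD.
exists (deg e y); first by rewrite inE in yD.
by apply/card_gt0P; exists (x, y); rewrite inE /= exy eqxx andbT; rewrite inE in xD.
Qed.

End DegreeCounting.

Section DiagonalEdges.
Variables (n : nat) (e : rel 'I_n) (k : nat).

Let E := [set p in edges e | (deg e p.1 == k) && (deg e p.2 == k)].
Let D := [set v | deg e v == k].

Lemma card_eset_diag : #|eset @: E| = medge e k k.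
Proof.
rewrite card_in_imset; first by apply: eq_card => p; rewrite !inE orbb.
by move=> p q /setIdP [pe _] /setIdP [qe _]; exact: eset_inj pe qe.
Qed.

Lemma eset_diag_sub : eset @: E \subset [set A : {set 'I_n} | A \subset D & #|A| == 2].
Proof.
apply/subsetP => A /imsetP [[a b]]; rewrite !inE /= => /and3P [ab /eqP da /eqP db] ->.
rewrite /eset subUset !sub1set !inE da db !eqxx cards2 /= eqSS eqb1.
by apply: contraTneq ab => ->; rewrite ltnn.
Qed.

Lemma medge_diag_le : medge e k k <= 'C(ndeg e k, 2).
Proof. by rewrite -card_eset_diag -cards_draws subset_leq_card // eset_diag_sub. Qed.

(* [medge e k k = 3] would make the three vertices of degree k pairwise adjacent. *)
Lemma tree_medge_diag_le2 : is_tree e -> ndeg e k = 3 -> medge e k k <= 2.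
Proof.
move=> tree D3; have [[sym _] _] := tree; have cardD : #|D| = 3 := D3.
have := medge_diag_le; rewrite D3 leq_eqVlt => /orP [/eqP m3 | //]; exfalso.
have full : eset @: E = [set A : {set 'I_n} | A \subset D & #|A| == 2].
  by apply/eqP; rewrite eqEcard eset_diag_sub cards_draws card_eset_diag m3 cardD.
have adj x y : x \in D -> y \in D -> x != y -> e x y.
  move=> xD yD xy; have : [set x; y] \in eset @: E.
    by rewrite full inE subUset !sub1set xD yD cards2 xy.
  case/imsetP => p; rewrite inE => /andP [pe _] /esym eq_p.
  exact: eset_edge sym pe eq_p xy.
have [a aD] : exists a, a \in D by apply/card_gt0P; rewrite cardD.
have /cards2P [b [c [bc Da]]] : #|D :\ a| == 2.
  by move: cardD; rewrite (cardsD1 a) aD; lia.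
have : b \in D :\ a by rewrite Da set21.
have : c \in D :\ a by rewrite Da set22.
rewrite !in_setD1 => /andP [ca cD] /andP [ba bD].
have ab : a != b by rewrite eq_sym.
have ac : a != c by rewrite eq_sym.
exact: tree_no_triangle tree (adj a b aD bD ab) (adj b c bD cD bc) (adj a c aD cD ac).
Qed.

End DiagonalEdges.

Section ChemicalTree.
Variables (n : nat) (e : rel 'I_n).
Hypotheses (tree : chemical_tree e) (n_gt2 : 2 < n).

Let sym : symmetric e := proj1 (proj1 (proj1 tree)).
Let irr : irreflexive e := proj2 (proj1 (proj1 tree)).
Let conn : connected_graph e := proj1 (proj2 (proj1 tree)).
Let card_edges : #|edges e| = n.-1 := proj2 (proj2 (proj1 tree)).
Let chem : chemical e := proj2 tree.

Lemma ndeg0 : ndeg e 0 = 0.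
Proof.
apply/eqP; rewrite cards_eq0; apply/eqP/setP => v; rewrite !inE.
by apply/negbTE; rewrite -lt0n deg_gt0 // ltnW.
Qed.

Lemma medge11 : medge e 1 1 = 0.
Proof.
apply/eqP; rewrite cards_eq0; apply/eqP/setP => -[u v]; rewrite !inE /= orbb.
apply/negP => /and3P [/andP [_ euv] /eqP du /eqP dv].
exact: leaves_nonadjacent sym conn n_gt2 euv du dv.
Qed.

Lemma ndeg_total : ndeg e 1 + ndeg e 2 + ndeg e 3 + ndeg e 4 = n.
Proof. by rewrite -[RHS](sum_ndeg chem) !big_ord_recr big_ord0 /= ndeg0. Qed.

Lemma ndeg_handshake :
  ndeg e 1 + 2 * ndeg e 2 + 3 * ndeg e 3 + 4 * ndeg e 4 = 2 * n.-1.
Proof. by have := handshake sym irr chem; rewrite card_edges !big_ord_recr big_ord0 /=; lia. Qed.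

Lemma medge_rows :
  [/\ medge e 1 2 + medge e 1 3 + medge e 1 4 = ndeg e 1,
      medge e 1 2 + 2 * medge e 2 2 + medge e 2 3 + medge e 2 4 = 2 * ndeg e 2,
      medge e 1 3 + medge e 2 3 + 2 * medge e 3 3 + medge e 3 4 = 3 * ndeg e 3 &
      medge e 1 4 + medge e 2 4 + medge e 3 4 + 2 * medge e 4 4 = 4 * ndeg e 4].
Proof.
move: (sum_arcs_row chem 1) (sum_arcs_row chem 2) (sum_arcs_row chem 3) (sum_arcs_row chem 4).
rewrite !big_ord_recr !big_ord0 /= !arcs0 // !arcs_medge // /minn /maxn /= medge11.
by move=> r1 r2 r3 r4; split; lia.
Qed.

Lemma medge_deg4_free : ndeg e 4 = 0 ->
  [/\ medge e 1 4 = 0, medge e 2 4 = 0, medge e 3 4 = 0 & medge e 4 4 = 0].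
Proof. by case: medge_rows => _ _ _ r4 N4; split; lia. Qed.

Lemma maxdeg3_ndeg4 : maxdeg_le e 3 <-> ndeg e 4 = 0.
Proof.
split=> [deg_le3 | N4 v].
  apply/eqP; rewrite cards_eq0; apply/eqP/setP => v; rewrite !inE.
  by apply/negbTE; rewrite neq_ltn ltnS deg_le3.
have := chem v; rewrite leq_eqVlt ltnS => /orP [/eqP dv4 | //].
by move/eqP: N4; rewrite cards_eq0 => /eqP/setP/(_ v); rewrite !inE dv4.
Qed.

Lemma medge_boundary2 : 0 < ndeg e 2 < n -> 0 < medge e 1 2 + medge e 2 3 + medge e 2 4.
Proof.
case/(arcs_boundary conn) => j j2 arcs_pos.
have j_lt5 : j < 5.
  by case/card_gt0P: arcs_pos => x; rewrite inE => /andP [_ /eqP <-]; rewrite ltnS chem.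
have j0 : j != 0 by apply: contraTneq arcs_pos => ->; rewrite arcs0.
move: arcs_pos; rewrite arcs_medge // eq_sym (negbTE j2) muln1.
have : [|| j == 1, j == 3 | j == 4] by move: j0 j2 j_lt5; case: j => [|[|[|[|[|]]]]].
by case/or3P => /eqP ->; rewrite /minn /maxn /=; lia.
Qed.

End ChemicalTree.

(** * The reduced Sombor index in terms of edge counts *)

Local Open Scope ring_scope.
Local Notation R := Rdefinitions.R.

Definition so_weight (i j : nat) : R := Num.sqrt ((i%:R - 1) ^+ 2 + (j%:R - 1) ^+ 2).

Definition s2 : R := Num.sqrt 2.
Definition r5 : R := Num.sqrt 5.
Definition r10 : R := Num.sqrt 10.
Definition r13 : R := Num.sqrt 13.

Lemma so_weightC i j : so_weight i j = so_weight j i.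
Proof. by rewrite /so_weight addrC. Qed.

Lemma so_weight_leaf j : (0 < j)%N -> so_weight 1 j = j.-1%:R.
Proof.
case: j => // j _.
by rewrite /so_weight subrr expr0n add0r mulrSr addrK sqrtr_sqr ger0_norm.
Qed.

Lemma so_weight_diag i : (0 < i)%N -> so_weight i i = i.-1%:R * s2.
Proof.
case: i => // i _; rewrite /so_weight.
have -> : i.+1%:R - 1 = i%:R :> R by rewrite mulrSr addrK.
by rewrite -mulr2n -[_ *+ 2]mulr_natr sqrtrM ?exprn_ge0 // sqrtr_sqr ger0_norm.
Qed.

Lemma so_weight_mixed : [/\ so_weight 2 3 = r5, so_weight 2 4 = r10 & so_weight 3 4 = r13].
Proof. by split; rewrite /so_weight; congr Num.sqrt; ring. Qed.

Lemma SO_red_arcs n (e : rel 'I_n) : symmetric e -> irreflexive e -> chemical e ->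
  SO_red e *+ 2 = \sum_(i < 5) \sum_(j < 5) so_weight i j *+ arcs e i j.
Proof.
move=> sym irr chem; rewrite -sum_arcs_deg // sum_arcs_edges // => [|x].
  by congr (_ *+ 2); apply: eq_bigr => p _; rewrite RsqrtE.
exact: so_weightC.
Qed.

Lemma SO_red_medge n (e : rel 'I_n) : symmetric e -> irreflexive e -> chemical e ->
  SO_red e = (medge e 1 2)%:R + 2 * (medge e 1 3)%:R + 3 * (medge e 1 4)%:R
    + s2 * (medge e 2 2)%:R + r5 * (medge e 2 3)%:R + r10 * (medge e 2 4)%:R
    + 2 * s2 * (medge e 3 3)%:R + r13 * (medge e 3 4)%:R + 3 * s2 * (medge e 4 4)%:R.
Proof.
move=> sym irr chem; apply/eqP; rewrite -(eqr_pMn2r (n := 2)) //; apply/eqP.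
rewrite SO_red_arcs // !big_ord_recr !big_ord0 /= !arcs0 // ![arcs e 0 _]arcsC //.
rewrite !arcs0 // !mulr0n !arcs_medge // /minn /maxn /=.
rewrite (so_weightC 2 1) (so_weightC 3 1) (so_weightC 4 1) (so_weightC 3 2).
rewrite (so_weightC 4 2) (so_weightC 4 3) !so_weight_leaf // !so_weight_diag //.
by have [-> -> ->] := so_weight_mixed; rewrite /=; ring.
Qed.

Lemma sqrt_between (k : nat) (a b : R) :
  0 <= a -> 0 <= b -> a ^+ 2 < k%:R -> k%:R < b ^+ 2 -> a < Num.sqrt k%:R < b.
Proof.
move=> a_ge0 b_ge0; rewrite !expr2 => ak kb.
have sq : Num.sqrt (k%:R : R) * Num.sqrt k%:R = k%:R by rewrite -expr2 sqr_sqrtr.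
by have := sqrtr_ge0 (k%:R : R) => sqrt_ge0; apply/andP; split; nra.
Qed.

Lemma s2_bounds : 239 / 169 < s2 < 577 / 408.
Proof. by apply: sqrt_between; lra. Qed.

Lemma r5_bounds : 682 / 305 < r5 < 161 / 72.
Proof. by apply: sqrt_between; lra. Qed.

Lemma r10_bounds : 117 / 37 < r10 < 721 / 228.
Proof. by apply: sqrt_between; lra. Qed.

Lemma r13_bounds : 137 / 38 < r13 < 119 / 33.
Proof. by apply: sqrt_between; lra. Qed.

(** * A lower bound from the degree profile *)

(* [N i] and [m i j] (i <= j) stand for n_i and m_{i,j} of a chemical tree on [nn]
   vertices whose reduced Sombor index is [SO]. *)
Record tree_profile (nn SO : R) (N : nat -> R) (m : nat -> nat -> R) : Prop := {
  profile_ge0 : forall i j, 0 <= m i j;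
  profile_row1 : m 1 2 + m 1 3 + m 1 4 = N 1;
  profile_row2 : m 1 2 + 2 * m 2 2 + m 2 3 + m 2 4 = 2 * N 2;
  profile_row3 : m 1 3 + m 2 3 + 2 * m 3 3 + m 3 4 = 3 * N 3;
  profile_row4 : m 1 4 + m 2 4 + m 3 4 + 2 * m 4 4 = 4 * N 4;
  profile_count : N 1 + N 2 + N 3 + N 4 = nn;
  profile_degree_sum : N 1 + 2 * N 2 + 3 * N 3 + 4 * N 4 = 2 * (nn - 1);
  profile_SO : SO = m 1 2 + 2 * m 1 3 + 3 * m 1 4 + s2 * m 2 2 + r5 * m 2 3
    + r10 * m 2 4 + 2 * s2 * m 3 3 + r13 * m 3 4 + 3 * s2 * m 4 4 }.

Lemma chemical_tree_profile n (e : rel 'I_n) : chemical_tree e -> (2 < n)%N ->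
  tree_profile n%:R (SO_red e) (fun i => (ndeg e i)%:R) (fun i j => (medge e i j)%:R).
Proof.
move=> tree n_gt2; have [[[sym irr] _] chem] := tree.
have [r1 r2 r3 r4] := medge_rows tree n_gt2.
split=> [i j | | | | | | |]; last exact: SO_red_medge.
- exact: ler0n.
- by rewrite -!natrD r1.
- by rewrite -natrM -!natrD r2 natrM.
- by rewrite -natrM -!natrD r3 natrM.
- by rewrite -natrM -!natrD r4 natrM.
- by rewrite -!natrD ndeg_total.
- rewrite -!natrM -!natrD ndeg_handshake // natrM -subn1 natrB //; lia.
Qed.

(* The value of SO_red on Omega(n), see [class_SO_Omega]. *)
Definition Omega_SO (nn : R) : R := 5 + 5 * r5 + (nn - 9) * s2.

Section ProfileBounds.
Variables (nn SO : R) (N : nat -> R) (m : nat -> nat -> R).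
Hypothesis P : tree_profile nn SO N m.

(* Charge a vertex of degree 1, 2, 3, 4 the potential 1 - s2, 0, s2/2, s2 per incident
   edge: every edge weight exceeds s2 by at least the potentials of its two ends, the
   surpluses (up to a factor 2) being the [slack*] terms, and the potentials add up to
   the bound. *)
Lemma profile_SO_excess :
  2 * (1 - s2) + (1 + s2 / 2) * N 3 + 2 * (1 + s2) * N 4 <= SO - (nn - 1) * s2.
Proof.
case: P => ge0 r1 r2 r3 r4 cnt dsum ->.
have /andP [s2_lo s2_hi] := s2_bounds; have /andP [r5_lo _] := r5_bounds.
have /andP [r10_lo _] := r10_bounds; have /andP [r13_lo _] := r13_bounds.
have edges_s2 : (nn - 1) * s2 = (m 1 2 + m 1 3 + m 1 4 + m 2 2 + m 2 3 + m 2 4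
    + m 3 3 + m 3 4 + m 4 4) * s2 by congr (_ * s2); lra.
have N3_s2 : 3 * N 3 * s2 = (m 1 3 + m 2 3 + 2 * m 3 3 + m 3 4) * s2 by rewrite r3.
have N4_s2 : 4 * N 4 * s2 = (m 1 4 + m 2 4 + m 3 4 + 2 * m 4 4) * s2 by rewrite r4.
have N1_eq : N 1 = 2 + N 3 + 2 * N 4 by lra.
have N1_s2 : N 1 * s2 = (m 1 2 + m 1 3 + m 1 4) * s2 by rewrite r1.
have N1_s2' : N 1 * s2 = (2 + N 3 + 2 * N 4) * s2 by rewrite N1_eq.
have slack13 : 0 <= m 1 3 * (2 - s2) by apply: mulr_ge0 => //; lra.
have slack14 : 0 <= m 1 4 * (2 - s2) by apply: mulr_ge0 => //; lra.
have slack23 : 0 <= m 2 3 * (2 * r5 - 3 * s2) by apply: mulr_ge0 => //; lra.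
have slack24 : 0 <= m 2 4 * (r10 - 2 * s2) by apply: mulr_ge0 => //; lra.
have slack34 : 0 <= m 3 4 * (2 * r13 - 5 * s2) by apply: mulr_ge0 => //; lra.
lra.
Qed.

Lemma Omega_SO_lt_branching :
  4 <= N 3 \/ 2 <= N 4 \/ 1 <= N 3 /\ 1 <= N 4 -> Omega_SO nn < SO.
Proof.
move=> branching; have := profile_SO_excess; case: P => ge0 _ _ r3 r4 _ _ _.
have N3_ge0 : 0 <= N 3.
  by have := ge0 1 3; have := ge0 2 3; have := ge0 3 3; have := ge0 3 4; lra.
have N4_ge0 : 0 <= N 4.
  by have := ge0 1 4; have := ge0 2 4; have := ge0 3 4; have := ge0 4 4; lra.
have /andP [s2_lo s2_hi] := s2_bounds; have /andP [_ r5_hi] := r5_bounds.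
have above a k : a <= N k -> 0 <= (N k - a) * s2 by move=> ?; apply: mulr_ge0; lra.
rewrite /Omega_SO; case: branching => [h3 | [h4 | [h3 h4]]].
- by have := above _ _ h3; have := above _ _ N4_ge0; lra.
- by have := above _ _ N3_ge0; have := above _ _ h4; lra.
- by have := above _ _ h3; have := above _ _ h4; lra.
Qed.

Lemma Omega_SO_lt_one_deg4 : N 3 = 0 -> N 4 = 1 -> m 4 4 = 0 -> Omega_SO nn < SO.
Proof.
move=> N3 N4 m44; case: P => ge0 r1 r2 r3 r4 cnt dsum ->.
have := ge0 1 3; have := ge0 2 3; have := ge0 3 3; have := ge0 3 4 => ? ? ? ?.
have [m13 m23 m33 m34] : [/\ m 1 3 = 0, m 2 3 = 0, m 3 3 = 0 & m 3 4 = 0] by split; lra.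
have m12 : m 1 2 = 4 - m 1 4 by lra.
have m24 : m 2 4 = 4 - m 1 4 by lra.
have m22 : m 2 2 = nn - 9 + m 1 4 by lra.
rewrite m12 m13 m22 m23 m24 m33 m34 m44 /Omega_SO.
have /andP [s2_lo _] := s2_bounds; have /andP [_ r5_hi] := r5_bounds.
have /andP [r10_lo r10_hi] := r10_bounds.
have : 0 <= m 1 4 * (2 + s2 - r10) by apply: mulr_ge0 => //; lra.
lra.
Qed.

Lemma Omega_SO_lt_three_deg3 : N 3 = 3 -> N 4 = 0 ->
  m 3 3 <= 1 \/ m 3 3 = 2 /\ 1 <= m 1 3 -> Omega_SO nn < SO.
Proof.
move=> N3 N4 m33; case: P => ge0 r1 r2 r3 r4 cnt dsum ->.
have := ge0 1 4; have := ge0 2 4; have := ge0 3 4; have := ge0 4 4 => ? ? ? ?.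
have [m14 m24 m34 m44] : [/\ m 1 4 = 0, m 2 4 = 0, m 3 4 = 0 & m 4 4 = 0] by split; lra.
have m12 : m 1 2 = 5 - m 1 3 by lra.
have m23 : m 2 3 = 9 - m 1 3 - 2 * m 3 3 by lra.
have m22 : m 2 2 = nn - 15 + m 1 3 + m 3 3 by lra.
rewrite m12 m14 m22 m23 m24 m34 m44 /Omega_SO.
have /andP [s2_lo s2_hi] := s2_bounds; have /andP [r5_lo r5_hi] := r5_bounds.
case: m33 => [m33_le1 | [-> m13_ge1]].
- have : 0 <= m 1 3 * (1 + s2 - r5) by apply: mulr_ge0 => //; lra.
  have : 0 <= (1 - m 3 3) * (2 * r5 - 3 * s2) by apply: mulr_ge0; lra.
  lra.
- have : 0 <= (m 1 3 - 1) * (1 + s2 - r5) by apply: mulr_ge0; lra.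
  lra.
Qed.

End ProfileBounds.

(** * The classes [A_i] and [Omega(n)] *)

Definition mvec_SO (v : nat * nat * nat * nat * nat) : R :=
  let: (m33, m23, m12, m13, m22) := v in
  m12%:R + 2 * m13%:R + s2 * m22%:R + r5 * m23%:R + 2 * s2 * m33%:R.

Lemma SO_red_mvec n (e : rel 'I_n) : chemical_tree e -> (2 < n)%N -> ndeg e 4 = 0%N ->
  SO_red e = mvec_SO (mvec e).
Proof.
move=> tree n_gt2 N4; have [[[sym irr] _] chem] := tree.
rewrite SO_red_medge //; have [-> -> -> ->] := medge_deg4_free tree n_gt2 N4.
by rewrite /=; ring.
Qed.

Definition class_mvec (n k : nat) : nat * nat * nat * nat * nat :=
  match k with
  | 1 => Avec n 1
  | 2 => Avec n 4
  | 3 => Avec n 3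
  | 4 => Avec n 2
  | 14 => (2, 5, 5, 0, n - 13)%N
  | _ => Avec n (18 - k)%N
  end.

Lemma classT_mvec n k (e : rel 'I_n) : (13 <= n)%N -> (1 <= k <= 14)%N -> classT k e ->
  [/\ chemical_tree e, ndeg e 4 = 0%N & mvec e = class_mvec n k].
Proof.
move=> hn; have n_gt2 : (2 < n)%N by lia.
case: k => [|[|[|[|[|[|[|[|[|[|[|[|[|[|[|k]]]]]]]]]]]]]]] //= _; last first.
  move=> [tree [N3 [N2 [N1 [m12 [m23 [m13 [m33 m22]]]]]]]].
  rewrite /mvec m12 m23 m13 m33 m22; have := ndeg_total tree n_gt2.
  by split=> //; lia.
all: by case=> tree [/(maxdeg3_ndeg4 tree) N4 [_ mv]].
Qed.

Lemma class_SO_lt n k : (13 <= n)%N -> (1 <= k < 14)%N ->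
  mvec_SO (class_mvec n k) < mvec_SO (class_mvec n k.+1).
Proof.
move=> hn; have /andP [s2_lo s2_hi] := s2_bounds; have /andP [r5_lo r5_hi] := r5_bounds.
by case: k => [|[|[|[|[|[|[|[|[|[|[|[|[|[|k]]]]]]]]]]]]]] //= _;
  rewrite !natrB ?(leq_trans _ hn) //; lra.
Qed.

Lemma class_SO_Omega n : (13 <= n)%N -> mvec_SO (class_mvec n 14) = Omega_SO n%:R.
Proof. by move=> hn; rewrite /= natrB // /Omega_SO; ring. Qed.

Lemma Avec_classify (n N1 N2 N3 m12 m13 m22 m23 m33 : nat) :
  (13 <= n)%N -> (N1 + N2 + N3 = n)%N -> (N1 + 2 * N2 + 3 * N3 = 2 * n.-1)%N ->
  (m12 + m13 = N1)%N -> (m12 + 2 * m22 + m23 = 2 * N2)%N ->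
  (m13 + m23 + 2 * m33 = 3 * N3)%N ->
  (N3 <= 2)%N -> (m33 <= 'C(N3, 2))%N -> (0 < m12 + m23)%N ->
  exists2 i, (1 <= i <= 13)%N & (m33, m23, m12, m13, m22) = Avec n i.
Proof.
move=> hn cnt dsum r1 r2 r3 N3_le2 m33_le pos.
have m12_le4 : (m12 <= 4)%N by lia.
have witness i : (1 <= i <= 13)%N -> (m33, m23, m12, m13, m22) = Avec n i ->
  exists2 i, (1 <= i <= 13)%N & (m33, m23, m12, m13, m22) = Avec n i by exists i.
case: N3 N3_le2 m33_le r3 cnt dsum => [|[|[|//]]] _ m33_le r3 cnt dsum.
- by apply: (witness 1) => //=; congr (_, _, _, _, _); lia.
- have {m33_le} m33_0 : m33 = 0%N by move: m33_le; rewrite bin_small //; lia.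
  have : [|| m12 == 1, m12 == 2 | m12 == 3]%N by lia.
  case/or3P => /eqP m12_eq; [apply: (witness 2) | apply: (witness 3) | apply: (witness 4)];
    by rewrite //=; congr (_, _, _, _, _); lia.
- rewrite binn in m33_le.
  case: m33 witness m33_le r3 => [|[|//]] witness _ r3;
  case: m12 witness r1 r2 pos m12_le4 => [|[|[|[|[|//]]]]] witness r1 r2 pos _;
  [ apply: (witness 5) | apply: (witness 6) | apply: (witness 7) | apply: (witness 9)
  | apply: (witness 11) | lia | apply: (witness 8) | apply: (witness 10)
  | apply: (witness 12) | apply: (witness 13) ];
  by rewrite //=; congr (_, _, _, _, _); lia.
Qed.

Lemma inA_of_counts n (T : rel 'I_n) : (13 <= n)%N -> chemical_tree T ->
  ndeg T 4 = 0%N -> (ndeg T 3 <= 2)%N -> exists2 i, (1 <= i <= 13)%N & inA i T.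
Proof.
move=> hn tree N4 N3_le2; have n_gt2 : (2 < n)%N by lia.
have [r1 r2 r3 r4] := medge_rows tree n_gt2.
have [m14 m24 m34 m44] := medge_deg4_free tree n_gt2 N4.
have cnt := ndeg_total tree n_gt2; have dsum := ndeg_handshake tree n_gt2.
have [i hi mv] : exists2 i, (1 <= i <= 13)%N & mvec T = Avec n i.
  apply: (@Avec_classify n (ndeg T 1) (ndeg T 2) (ndeg T 3)); try lia.
    exact: medge_diag_le.
  by have := medge_boundary2 tree n_gt2; lia.
by exists i; last by split; [|split; [apply/(maxdeg3_ndeg4 tree) |]].
Qed.

Lemma SO_red_gt_Omega n (T : rel 'I_n) : (13 <= n)%N -> chemical_tree T ->
  ~ (exists i, (1 <= i <= 13)%N /\ inA i T) -> ~ inOmega T -> Omega_SO n%:R < SO_red T.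
Proof.
move=> hn tree notA notO; have n_gt2 : (2 < n)%N by lia.
have P := chemical_tree_profile tree n_gt2.
have [N4_0 | N4_gt0] := posnP (ndeg T 4).
  have [N3_le2 | N3_gt2] := leqP (ndeg T 3) 2.
    by case: notA; have [i hi Ai] := inA_of_counts hn tree N4_0 N3_le2; exists i.
  have [N3_eq3 | N3_ge4] : ndeg T 3 = 3%N \/ (4 <= ndeg T 3)%N by lia.
    apply: (Omega_SO_lt_three_deg3 P); rewrite /= ?N3_eq3 ?N4_0 //.
    have m33_le2 := tree_medge_diag_le2 (proj1 tree) N3_eq3.
    have [m33_le1 | m33_eq2] : (medge T 3 3 <= 1)%N \/ medge T 3 3 = 2%N by lia.
      by left; rewrite lern1.
    have [m13_0 | m13_gt0] := posnP (medge T 1 3).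
      case: notO; have [r1 r2 r3 r4] := medge_rows tree n_gt2.
      have [m14 m24 m34 m44] := medge_deg4_free tree n_gt2 N4_0.
      have cnt := ndeg_total tree n_gt2; have dsum := ndeg_handshake tree n_gt2.
      by do !split => //; lia.
    by right; rewrite m33_eq2 ler1n.
  by apply: (Omega_SO_lt_branching P); left; rewrite ler_nat.
have [[N4_1 N3_0] | branching] :
    ndeg T 4 = 1%N /\ ndeg T 3 = 0%N \/ (2 <= ndeg T 4)%N \/ (1 <= ndeg T 3)%N by lia.
  apply: (Omega_SO_lt_one_deg4 P); rewrite /= ?N3_0 ?N4_1 //.
  by have := medge_diag_le T 4; rewrite N4_1 bin_small // leqn0 => /eqP ->.
apply: (Omega_SO_lt_branching P); right.
by case: branching => [N4_ge2 | N3_ge1]; [left | right]; rewrite ?ler1n ?ler_nat.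
Qed.

Theorem theorem3p4 (n : nat) (hn : (13 <= n)%N)
  (Ts : nat -> rel 'I_n) (T : rel 'I_n) :
  (forall k, (1 <= k <= 14)%N -> classT k (Ts k)) ->
  chemical_tree T ->
  ~ (exists i, (1 <= i <= 13)%N /\ inA i T) ->
  ~ inOmega T ->
  (forall k, (1 <= k < 14)%N -> (SO_red (Ts k) < SO_red (Ts k.+1))%R) /\
  (SO_red (Ts 14%N) < SO_red T)%R.
Proof.
move=> classes tree notA notO.
have SO_class k : (1 <= k <= 14)%N -> SO_red (Ts k) = mvec_SO (class_mvec n k).
  move=> hk; have [tree_k N4 mv] := classT_mvec hn hk (classes k hk).
  by rewrite SO_red_mvec // ?mv //; lia.
split=> [k hk | ].
  by rewrite !SO_class; [exact: class_SO_lt | lia | lia].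
by rewrite SO_class // class_SO_Omega //; exact: SO_red_gt_Omega.
Qed.
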